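(* Let $\mu$ be the measure associated with a sequence $(p_n,q_n)_{n\ge0}$, $0\le p_n,q_n\le1$, by the non-homogeneous Markov rule, and let $c_n=\frac{-1}{n\log2}\sum_{I\in\mathcal F_n}\mu(I)\log\mu(I)$. Then for $\mu$-almost every $x\in\mathbb K$, $$\lim_{n\to\infty}\left[\frac{\log\mu(I_n(x))}{-n\log 2}-c_n\right]=0.$$
   Context: $\mathbb K=\{0,1\}^{\mathbb N}$; $\mathcal F_n$ is the set of cylinders $I_{\epsilon_1\dots\epsilon_n}$ of generation $n$; $I_n(x)$ is the cylinder of $\mathcal F_n$ containing $x$. $\mu$: $\mu(I_0)=p_0$, $\mu(I_1)=1-p_0$, and for $n\ge1$, $I=I_{\epsilon_1\dots\epsilon_n}$, the child $I_{\epsilon_1\dots\epsilon_n0}$ receives the proportion $p_n$ (resp. $q_n$) of $\mu(I)$ and $I_{\epsilon_1\dots\epsilon_n1}$ the proportion $1-p_n$ (resp. $1-q_n$) when $\epsilon_n=0$ (resp. $\epsilon_n=1$). Convention $0\log0=0$. *)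

From Stdlib Require Import Reals List.
Open Scope R_scope.

(* K = {0,1}^N : points are x : nat -> bool, with epsilon_{k+1} = x k
   (false = 0, true = 1). A cylinder of generation n is given by a word
   w = [eps_1; ...; eps_n] : list bool of length n. *)

(* Proportion given to the child with last letter b, at step k (going from
   generation k to k+1), given the previous letter prev (None when k = 0). *)
Definition step_factor (p q : nat -> R) (k : nat) (prev : option bool) (b : bool) : R :=
  match prev with
  | Some true => if b then 1 - q k else q k
  | _ => if b then 1 - p k else p k
  end.

Fixpoint mass_aux (p q : nat -> R) (k : nat) (prev : option bool) (w : list bool) : R :=
  match w with
  | nil => 1
  | b :: w' => step_factor p q k prev b * mass_aux p q (S k) (Some b) w'
  end.

Definition cyl_mass (p q : nat -> R) (w : list bool) : R := mass_aux p q 0 None w.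

Fixpoint prefix (x : nat -> bool) (n : nat) : list bool :=
  match n with
  | O => nil
  | S m => prefix x m ++ (x m :: nil)
  end.

Definition in_cyl (w : list bool) (x : nat -> bool) : Prop :=
  prefix x (length w) = w.

Fixpoint words (n : nat) : list (list bool) :=
  match n with
  | O => nil :: nil
  | S m => flat_map (fun w => (false :: w) :: (true :: w) :: nil) (words m)
  end.

Definition xlogx (t : R) : R := if Req_EM_T t 0 then 0 else t * ln t.

Definition c_seq (p q : nat -> R) (n : nat) : R :=
  - / (INR n * ln 2) * fold_right Rplus 0 (map (fun w => xlogx (cyl_mass p q w)) (words n)).

(* mu-null sets: sets of outer measure 0 for the outer measure generated by
   mu on cylinders (which is the outer measure of the extension of mu). *)
Definition mu_null (p q : nat -> R) (N : (nat -> bool) -> Prop) : Prop :=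
  forall eps : R, eps > 0 ->
    exists W : nat -> list bool,
      (forall x, N x -> exists k, in_cyl (W k) x) /\
      (forall M : nat, fold_right Rplus 0 (map (fun k => cyl_mass p q (W k)) (seq 0 M)) <= eps).

From Stdlib Require Import Reals Lia Lra Psatz List Classical.
Open Scope R_scope.

(* ln mu(I_n(x)) is the sum of the logarithms of the n transition factors of a
   non-homogeneous Markov chain on {0,1}, and c_n is minus its mean over n ln 2.
   The variance of any block of m consecutive log-factors is at most 140 m: after
   conditioning on the first letter, the one-step term is bounded because t ln^2 t <= 4,
   and the difference between the means started from the letters 0 and 1 is damped by the
   factor |p_k - q_k| at each step, which the potential [variance + 4 gap^2] absorbs.
   Chebyshev's inequality at the times n = m^2 with threshold m^(7/4)/2, together with a
   union bound over the increments from m^2 to n < (m+1)^2, gives exceptional sets of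
   mass O(m^(-3/2)), and Borel-Cantelli concludes. *)

Lemma ln_0 : ln 0 = 0.
Proof. unfold ln; destruct (Rlt_dec 0 0) as [h|]; [exfalso; lra|reflexivity]. Qed.

Lemma ln_le_0 t : 0 <= t <= 1 -> ln t <= 0.
Proof.
  intros Ht. destruct (Req_dec t 0) as [->|Ht0]; [rewrite ln_0; lra|].
  destruct (Req_dec t 1) as [->|Ht1]; [rewrite ln_1; lra|].
  rewrite <- ln_1. left; apply ln_increasing; lra.
Qed.

(* The next two bounds follow from [v <= exp v] with [t = exp (-2 v)]. *)
Lemma xlnx_sq_le t : 0 <= t <= 1 -> t * ln t ^ 2 <= 4.
Proof.
  intros Ht. destruct (Req_dec t 0) as [->|Ht0]; [lra|].
  pose proof (ln_le_0 t Ht).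
  set (v := - ln t / 2).
  assert (Hexp : t * (exp v * exp v) = 1).
  { rewrite <- exp_plus, <- (exp_ln t) at 1 by lra. rewrite <- exp_plus.
    replace (ln t + (v + v)) with 0 by (unfold v; lra). apply exp_0. }
  pose proof (exp_ineq1_le v).
  replace (ln t) with (-2 * v) by (unfold v; lra).
  assert (v * v <= exp v * exp v) by (unfold v in *; nra). nra.
Qed.

Lemma neg_xlnx_le_sqrt y : 0 <= y <= 1 -> - (y * ln y) <= 2 * sqrt y.
Proof.
  intros Hy. destruct (Req_dec y 0) as [->|Hy0]; [rewrite ln_0, sqrt_0; lra|].
  pose proof (ln_le_0 y Hy).
  set (v := - ln y / 2).
  assert (Hsq : sqrt y = exp (- v)).
  { rewrite <- (exp_ln y) at 1 by lra. replace (ln y) with (- v + - v) by (unfold v; lra).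
    rewrite exp_plus. apply sqrt_square. left; apply exp_pos. }
  assert (Hy2 : y = exp (- v) * exp (- v)).
  { rewrite <- exp_plus, <- (exp_ln y) at 1 by lra. f_equal. unfold v; lra. }
  assert (Hinv : exp v * exp (- v) = 1).
  { rewrite <- exp_plus. replace (v + - v) with 0 by lra. apply exp_0. }
  pose proof (exp_ineq1_le v). pose proof (exp_pos (- v)).
  rewrite Hsq. replace (ln y) with (-2 * v) by (unfold v; lra). rewrite Hy2.
  assert (v * exp (- v) <= 1) by (unfold v in *; nra).
  assert (v * exp (- v) * exp (- v) <= 1 * exp (- v)) by (apply Rmult_le_compat_r; lra).
  lra.
Qed.

Lemma neg_xlnx_le_compl y : 0 <= y <= 1 -> - ((1 - y) * ln (1 - y)) <= y.
Proof.
  intros Hy. set (z := 1 - y).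
  destruct (Req_dec z 0) as [Hz|Hz]; [rewrite Hz, ln_0; lra|].
  assert (Hzpos : 0 < z) by (unfold z in *; lra).
  pose proof (exp_ineq1_le (ln (/ z))) as Hexp.
  rewrite exp_ln, ln_Rinv in Hexp by (auto using Rinv_0_lt_compat).
  assert (z * (- ln z) <= z * (/ z - 1)) by (apply Rmult_le_compat_l; lra).
  rewrite Rmult_minus_distr_l, Rinv_r in H by lra. unfold z in *; lra.
Qed.

Definition binary_entropy (f : R) : R := - (f * ln f + (1 - f) * ln (1 - f)).

Lemma binary_entropy_ge0 f : 0 <= f <= 1 -> 0 <= binary_entropy f.
Proof.
  intros Hf. unfold binary_entropy.
  pose proof (ln_le_0 f Hf). pose proof (ln_le_0 (1 - f) ltac:(lra)). nra.
Qed.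

Lemma binary_entropy_le f t : 0 <= f <= 1 -> f <= t \/ 1 - f <= t ->
  binary_entropy f <= 3 * sqrt t.
Proof.
  assert (Hsmall : forall g, 0 <= g <= 1 -> binary_entropy g <= 3 * sqrt g).
  { intros g Hg. unfold binary_entropy.
    pose proof (neg_xlnx_le_sqrt g Hg). pose proof (neg_xlnx_le_compl g Hg).
    pose proof (sqrt_sqrt g (proj1 Hg)). pose proof (sqrt_pos g).
    assert (sqrt g <= 1) by (rewrite <- sqrt_1; apply sqrt_le_1_alt; lra). nra. }
  intros Hf [Ht|Ht].
  - eapply Rle_trans; [apply Hsmall; auto|].
    apply Rmult_le_compat_l; [lra|]. apply sqrt_le_1_alt; lra.
  - replace (binary_entropy f) with (binary_entropy (1 - f))
      by (unfold binary_entropy; replace (1 - (1 - f)) with f by ring; ring).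
    eapply Rle_trans; [apply Hsmall; lra|].
    apply Rmult_le_compat_l; [lra|]. apply sqrt_le_1_alt; lra.
Qed.

Lemma binary_entropy_diff_le a b : 0 <= a <= 1 -> 0 <= b <= 1 ->
  Rabs (binary_entropy a - binary_entropy b) <= 3 * sqrt (1 - Rabs (a - b)).
Proof.
  intros Ha Hb.
  pose proof (binary_entropy_ge0 a Ha). pose proof (binary_entropy_ge0 b Hb).
  assert (binary_entropy a <= 3 * sqrt (1 - Rabs (a - b)) /\
          binary_entropy b <= 3 * sqrt (1 - Rabs (a - b))) as [HA HB].
  { unfold Rabs; destruct (Rcase_abs (a - b));
      split; apply binary_entropy_le; auto; (left; lra) || (right; lra). }
  apply Rabs_le; lra.
Qed.

(* Variance of the two-point law giving [c ln f] weight [f] and [c ln (1-f)] weight [1-f]. *)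
Lemma two_point_log_variance_le f c : 0 <= f <= 1 -> 0 <= c <= 1 ->
  f * (1 - f) * (c * ln f - c * ln (1 - f)) ^ 2 <= 16 * c.
Proof.
  intros Hf Hc.
  pose proof (xlnx_sq_le f Hf). pose proof (xlnx_sq_le (1 - f) ltac:(lra)).
  set (a := ln f) in *. set (b := ln (1 - f)) in *. clearbody a b.
  assert (f * (1 - f) * (a - b) ^ 2 <= 2 * f * a ^ 2 + 2 * (1 - f) * b ^ 2).
  { assert (0 <= f * (1 - f)) by nra.
    assert (f * (1 - f) * (a - b) ^ 2 <= f * (1 - f) * (2 * a ^ 2 + 2 * b ^ 2))
      by (apply Rmult_le_compat_l; [lra|]; pose proof (pow2_ge_0 (a + b)); nra).
    assert (0 <= f * a ^ 2) by (apply Rmult_le_pos; [lra|apply pow2_ge_0]).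
    assert (0 <= (1 - f) * b ^ 2) by (apply Rmult_le_pos; [lra|apply pow2_ge_0]).
    nra. }
  replace ((c * a - c * b) ^ 2) with (c ^ 2 * (a - b) ^ 2) by ring.
  nra.
Qed.

(* One step of the induction on the potential [variance + 4 mean_gap^2]: [Y] and [X] are
   the old and new [|mean_gap|], and [a^2 = mixing k]. *)
Lemma contraction_sq_le X Y a c : 0 <= X -> 0 <= Y -> 0 <= a <= 1 -> 0 <= c <= 1 ->
  X <= 3 * c * a + (1 - a ^ 2) * Y -> 4 * X ^ 2 <= 4 * Y ^ 2 - 2 * a ^ 2 * Y ^ 2 + 108 * c.
Proof.
  intros HX HY Ha Hc HB.
  set (B := 3 * c * a + (1 - a ^ 2) * Y) in *.
  assert (X ^ 2 <= B ^ 2) by (apply pow_incr; lra).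
  assert (c ^ 2 <= c) by nra.
  assert (c ^ 2 * a ^ 2 <= c).
  { assert (0 <= c ^ 2) by apply pow2_ge_0.
    assert (c ^ 2 * a ^ 2 <= c ^ 2 * 1) by (apply Rmult_le_compat_l; nra). lra. }
  assert (6 * c * a * (1 - a ^ 2) * Y <= a ^ 2 * Y ^ 2 / 2 + 18 * c).
  { assert (0 <= c * a * a ^ 2 * Y) by (repeat apply Rmult_le_pos; nra).
    assert (0 <= (a * Y - 6 * c) ^ 2) by apply pow2_ge_0. nra. }
  assert ((1 - a ^ 2) ^ 2 * Y ^ 2 <= (1 - a ^ 2) * Y ^ 2).
  { assert (0 <= Y ^ 2) by apply pow2_ge_0. assert (0 <= a ^ 2 <= 1) by nra. nra. }
  assert (B ^ 2 = 9 * (c ^ 2 * a ^ 2) + 6 * c * a * (1 - a ^ 2) * Y + (1 - a ^ 2) ^ 2 * Y ^ 2)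
    by (unfold B; ring).
  nra.
Qed.

Definition sumR (l : list R) : R := fold_right Rplus 0 l.

Lemma sumR_app l1 l2 : sumR (l1 ++ l2) = sumR l1 + sumR l2.
Proof. induction l1 as [|x l1 IH]; simpl; [lra|]. unfold sumR in *; simpl; rewrite IH; ring. Qed.

Lemma sumR_map_cons {A : Type} (f : A -> R) x l :
  sumR (map f (x :: l)) = f x + sumR (map f l).
Proof. reflexivity. Qed.

Lemma sumR_map_plus {A : Type} (f g : A -> R) l :
  sumR (map (fun x => f x + g x) l) = sumR (map f l) + sumR (map g l).
Proof. induction l as [|x l IH]; unfold sumR in *; simpl; [lra|]. rewrite IH; ring. Qed.

Lemma sumR_map_scal {A : Type} a (f : A -> R) l :
  sumR (map (fun x => a * f x) l) = a * sumR (map f l).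
Proof. induction l as [|x l IH]; unfold sumR in *; simpl; [lra|]. rewrite IH; ring. Qed.

Lemma sumR_map_le {A : Type} (f g : A -> R) l :
  (forall x, In x l -> f x <= g x) -> sumR (map f l) <= sumR (map g l).
Proof.
  induction l as [|x l IH]; intros H; unfold sumR in *; simpl; [lra|].
  pose proof (H x (or_introl eq_refl)). pose proof (IH (fun y h => H y (or_intror h))). lra.
Qed.

Lemma sumR_map_nonneg {A : Type} (f : A -> R) l : (forall x, 0 <= f x) -> 0 <= sumR (map f l).
Proof.
  intros H. induction l as [|x l IH]; unfold sumR in *; simpl; [lra|]. specialize (H x); lra.
Qed.

Lemma sumR_map_const_le {A : Type} (f : A -> R) l C :
  (forall x, In x l -> f x <= C) -> sumR (map f l) <= INR (length l) * C.
Proof.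
  induction l as [|x l IH]; intros H; unfold sumR in *; cbn [map length fold_right]; [simpl; lra|].
  rewrite S_INR. pose proof (H x (or_introl eq_refl)).
  pose proof (IH (fun y h => H y (or_intror h))). lra.
Qed.

Lemma sumR_flat_map {A B : Type} (f : B -> R) (g : A -> list B) l :
  sumR (map f (flat_map g l)) = sumR (map (fun x => sumR (map f (g x))) l).
Proof.
  induction l as [|x l IH]; simpl; [reflexivity|]. rewrite map_app, sumR_app, IH. reflexivity.
Qed.

Lemma sum_geom_half_le c0 M : sumR (map (fun j => (/ 2) ^ (j + c0)) (seq 0 M)) <= 2 * (/ 2) ^ c0.
Proof.
  assert (Hsum : sumR (map (fun j => (/ 2) ^ (j + c0)) (seq 0 M)) =
                2 * (/ 2) ^ c0 * (1 - (/ 2) ^ M)).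
  { induction M as [|M IH]; [unfold sumR; cbn; ring|].
    rewrite seq_S, map_app, sumR_app, IH. unfold sumR; cbn. rewrite pow_add. field. }
  rewrite Hsum. pose proof (pow_le (/ 2) M ltac:(lra)). pose proof (pow_le (/ 2) c0 ltac:(lra)).
  nra.
Qed.

Lemma map_seq_add {A : Type} (g : nat -> A) B M s :
  map (fun j => g (B + j)%nat) (seq s M) = map g (seq (B + s) M).
Proof.
  revert s; induction M as [|M IH]; intros s; [reflexivity|].
  cbn [seq map]. rewrite IH, Nat.add_succ_r. reflexivity.
Qed.

Lemma firstn_map_nth {A : Type} (d : A) (l : list A) M : (M <= length l)%nat ->
  firstn M l = map (fun k => nth k l d) (seq 0 M).
Proof.
  revert M; induction l as [|x l IH]; intros M HM; cbn [length] in HM.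
  - replace M with 0%nat by lia. reflexivity.
  - destruct M as [|M]; [reflexivity|]. cbn [firstn seq map nth].
    rewrite IH, <- seq_shift, map_map by lia. reflexivity.
Qed.

Section Enumeration.
Context {A : Type} (d : A) (st : nat -> list A).
Hypothesis st_nonempty : forall j, st j <> nil.

Definition flat_stages K := flat_map st (seq 0 K).
(* Nonempty stages make the first [k+1] of them longer than [k]. *)
Definition enum_stages k := nth k (flat_stages (S k)) d.

Lemma flat_stages_S K : flat_stages (S K) = flat_stages K ++ st K.
Proof. unfold flat_stages. rewrite seq_S, flat_map_app. cbn. rewrite app_nil_r. reflexivity. Qed.

Lemma flat_stages_length K : (K <= length (flat_stages K))%nat.
Proof.
  induction K as [|K IH]; [cbn; lia|]. rewrite flat_stages_S, length_app.
  destruct (st K) eqn:E; [exfalso; exact (st_nonempty K E)|]. cbn; lia.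
Qed.

Lemma flat_stages_prefix K K' : (K <= K')%nat -> exists l, flat_stages K' = flat_stages K ++ l.
Proof.
  intros H. induction H as [|K' _ [l IH]]; [exists nil; rewrite app_nil_r; reflexivity|].
  exists (l ++ st K'). rewrite flat_stages_S, IH, app_assoc. reflexivity.
Qed.

Lemma nth_flat_stages K i : (i < length (flat_stages K))%nat ->
  nth i (flat_stages K) d = enum_stages i.
Proof.
  intros Hi. unfold enum_stages.
  destruct (flat_stages_prefix K (Nat.max K (S i))) as [l Hl]; [lia|].
  destruct (flat_stages_prefix (S i) (Nat.max K (S i))) as [l' Hl']; [lia|].
  assert (Hi' : (i < length (flat_stages (S i)))%nat)
    by (pose proof (flat_stages_length (S i)); lia).
  rewrite <- (app_nth1 _ l d Hi), <- (app_nth1 _ l' d Hi'), <- Hl, <- Hl'. reflexivity.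
Qed.

Lemma enum_stages_complete j x : In x (st j) -> exists i, enum_stages i = x.
Proof.
  intros Hx. assert (Hflat : In x (flat_stages (S j))).
  { unfold flat_stages. apply in_flat_map. exists j. split; [apply in_seq; lia|exact Hx]. }
  destruct (In_nth _ _ d Hflat) as [i [Hi Hnth]].
  exists i. rewrite <- nth_flat_stages with (K := S j); auto.
Qed.

Lemma sum_enum_stages_le (f : A -> R) M : (forall x, 0 <= f x) ->
  sumR (map (fun k => f (enum_stages k)) (seq 0 M)) <=
  sumR (map (fun j => sumR (map f (st j))) (seq 0 M)).
Proof.
  intros Hf. pose proof (flat_stages_length M) as HM.
  rewrite (map_ext_in _ (fun k => f (nth k (flat_stages M) d))).
  2:{ intros k Hk. apply in_seq in Hk. rewrite nth_flat_stages; [reflexivity|lia]. }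
  rewrite <- (map_map (fun k => nth k (flat_stages M) d)), <- firstn_map_nth by exact HM.
  rewrite <- sumR_flat_map. fold (flat_stages M).
  rewrite <- (firstn_skipn M (flat_stages M)) at 2. rewrite map_app, sumR_app.
  pose proof (sumR_map_nonneg f (skipn M (flat_stages M)) Hf). lra.
Qed.

End Enumeration.

Lemma words_complete w : In w (words (length w)).
Proof.
  induction w as [|b w IH]; cbn; [auto|].
  apply in_flat_map. exists w; split; auto. destruct b; cbn; auto.
Qed.

Lemma prefix_length x n : length (prefix x n) = n.
Proof. induction n as [|n IH]; cbn; [reflexivity|]. rewrite length_app, IH; cbn; lia. Qed.

Lemma in_cyl_prefix x n : in_cyl (prefix x n) x.
Proof. unfold in_cyl. rewrite prefix_length. reflexivity. Qed.

Lemma prefix_app x m n : (m <= n)%nat -> exists s, prefix x n = prefix x m ++ s.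
Proof.
  intros H. induction H as [|n _ [s IH]]; [exists nil; rewrite app_nil_r; reflexivity|].
  exists (s ++ x n :: nil). cbn. rewrite IH, app_assoc. reflexivity.
Qed.

Lemma firstn_prefix x m n : (m <= n)%nat -> firstn m (prefix x n) = prefix x m.
Proof.
  intros H. destruct (prefix_app x m n H) as [s ->].
  rewrite firstn_app, prefix_length, Nat.sub_diag, app_nil_r.
  rewrite <- (prefix_length x m) at 1. apply firstn_all.
Qed.

Lemma inv_pow32_step x : 2 <= x -> / (x * sqrt x) + 2 / sqrt x <= 2 / sqrt (x - 1).
Proof.
  intros Hx. set (u := sqrt (x - 1)). set (v := sqrt x).
  assert (Hu : 0 < u) by (apply sqrt_lt_R0; lra).
  assert (Hv : 0 < v) by (apply sqrt_lt_R0; lra).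
  assert (Huu : u * u = x - 1) by (apply sqrt_sqrt; lra).
  assert (Hvv : v * v = x) by (apply sqrt_sqrt; lra).
  assert (Hkey : u * (1 + 2 * (v * v)) <= 2 * (v * v * v)).
  { apply Rsqr_incr_0_var; [unfold Rsqr|nra].
    replace (u * (1 + 2 * (v * v)) * (u * (1 + 2 * (v * v))))
      with ((v * v - 1) * (1 + 2 * (v * v)) * (1 + 2 * (v * v))) by nra.
    nra. }
  rewrite <- Hvv.
  replace (/ (v * v * v) + 2 / v) with ((1 + 2 * (v * v)) / (v * v * v)) by (field; lra).
  apply (Rmult_le_reg_l (u * (v * v * v))); [repeat apply Rmult_lt_0_compat; lra|].
  replace (u * (v * v * v) * ((1 + 2 * (v * v)) / (v * v * v))) with (u * (1 + 2 * (v * v)))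
    by (field; lra).
  replace (u * (v * v * v) * (2 / u)) with (2 * (v * v * v)) by (field; lra).
  exact Hkey.
Qed.

Lemma sum_inv_pow32_le B M : (2 <= B)%nat ->
  sumR (map (fun m => / (INR m * sqrt (INR m))) (seq B M)) <= 2 / sqrt (INR B - 1).
Proof.
  revert B; induction M as [|M IH]; intros B HB.
  - unfold sumR; cbn. unfold Rdiv. apply Rmult_le_pos; [lra|].
    left. apply Rinv_0_lt_compat, sqrt_lt_R0. apply (le_INR 2) in HB. cbn in HB. lra.
  - cbn [seq]. rewrite sumR_map_cons.
    specialize (IH (S B) ltac:(lia)).
    rewrite S_INR in IH. replace (INR B + 1 - 1) with (INR B) in IH by ring.
    apply (le_INR 2) in HB. cbn in HB. pose proof (inv_pow32_step (INR B) ltac:(lra)). lra.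
Qed.

Section Chain.
Variables p q : nat -> R.
Hypotheses (hp : forall n, 0 <= p n <= 1) (hq : forall n, 0 <= q n <= 1).

Notation sf := (step_factor p q).

Lemma step_factor_bounds k s b : 0 <= sf k s b <= 1.
Proof. destruct s as [[|]|], b; simpl; specialize (hp k); specialize (hq k); lra. Qed.

Lemma step_factor_sum k s : sf k s false + sf k s true = 1.
Proof. destruct s as [[|]|]; simpl; lra. Qed.

Lemma mass_aux_nonneg k s w : 0 <= mass_aux p q k s w.
Proof.
  revert k s; induction w as [|b w IH]; intros k s; simpl; [lra|].
  apply Rmult_le_pos; [apply step_factor_bounds|apply IH].
Qed.

(* Expectation over [F_n] for the chain started at time [k] after the letter [s]
   ([None] at time 0). *)
Definition expect k s n (F : list bool -> R) : R :=
  sumR (map (fun w => mass_aux p q k s w * F w) (words n)).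

Lemma expect_0 k s F : expect k s 0 F = F nil.
Proof. unfold expect, sumR; simpl; ring. Qed.

Lemma expect_S k s n F : expect k s (S n) F =
  sf k s false * expect (S k) (Some false) n (fun w => F (false :: w)) +
  sf k s true * expect (S k) (Some true) n (fun w => F (true :: w)).
Proof.
  unfold expect; cbn [words]. rewrite sumR_flat_map, <- !sumR_map_scal, <- sumR_map_plus.
  f_equal; apply map_ext; intros w. unfold sumR; simpl; ring.
Qed.

Lemma expect_ext k s n F G : (forall w, F w = G w) -> expect k s n F = expect k s n G.
Proof. intros H; unfold expect; f_equal; apply map_ext; intros w; rewrite H; reflexivity. Qed.

Lemma expect_lin k s n a b F G :
  expect k s n (fun w => a * F w + b * G w) = a * expect k s n F + b * expect k s n G.
Proof.
  unfold expect. rewrite <- !sumR_map_scal, <- sumR_map_plus.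
  f_equal; apply map_ext; intros w; ring.
Qed.

Lemma expect_const k s n c : expect k s n (fun _ => c) = c.
Proof.
  revert k s; induction n as [|n IH]; intros k s; [apply expect_0|].
  rewrite expect_S, !IH. pose proof (step_factor_sum k s). nra.
Qed.

Lemma expect_add_const k s n d F : expect k s n (fun w => d + F w) = d + expect k s n F.
Proof.
  rewrite (expect_ext k s n _ (fun w => d * 1 + 1 * F w)) by (intros; ring).
  rewrite expect_lin, expect_const. ring.
Qed.

Lemma expect_quadratic k s n F a : expect k s n (fun w => (F w - a) ^ 2) =
  expect k s n (fun w => F w ^ 2) - 2 * a * expect k s n F + a ^ 2.
Proof.
  pose proof (expect_lin k s n 1 (- 2 * a) (fun w => F w ^ 2) F) as Hlin. cbv beta in Hlin.
  transitivity (a ^ 2 + (1 * expect k s n (fun w => F w ^ 2) + - 2 * a * expect k s n F));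
    [|ring].
  rewrite <- Hlin, <- expect_add_const. apply expect_ext; intros; ring.
Qed.

Lemma expect_sq_dev k s n F a : expect k s n (fun w => (F w - a) ^ 2) =
  expect k s n (fun w => (F w - expect k s n F) ^ 2) + (expect k s n F - a) ^ 2.
Proof. rewrite !expect_quadratic. ring. Qed.

Fixpoint loglik (c : nat -> R) (k : nat) (s : option bool) (w : list bool) : R :=
  match w with
  | nil => 0
  | b :: w' => c k * ln (sf k s b) + loglik c (S k) (Some b) w'
  end.

Definition mean c k s n := expect k s n (loglik c k s).
Definition variance c k s n := expect k s n (fun w => (loglik c k s w - mean c k s n) ^ 2).
Definition mean_gap c k n := mean c k (Some false) n - mean c k (Some true) n.
Fixpoint weight_sum (c : nat -> R) k n : R :=
  match n with O => 0 | S n => c k + weight_sum c (S k) n end.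
Definition mixing k := 1 - Rabs (p k - q k).

Lemma mean_S c k s n : mean c k s (S n) =
  sf k s false * (c k * ln (sf k s false) + mean c (S k) (Some false) n) +
  sf k s true * (c k * ln (sf k s true) + mean c (S k) (Some true) n).
Proof.
  unfold mean at 1; rewrite expect_S; cbn [loglik].
  rewrite !expect_add_const. reflexivity.
Qed.

Lemma variance_S c k s n : variance c k s (S n) =
  sf k s false * (variance c (S k) (Some false) n +
     (c k * ln (sf k s false) + mean c (S k) (Some false) n - mean c k s (S n)) ^ 2) +
  sf k s true * (variance c (S k) (Some true) n +
     (c k * ln (sf k s true) + mean c (S k) (Some true) n - mean c k s (S n)) ^ 2).
Proof.
  unfold variance at 1; rewrite expect_S; cbn [loglik].
  set (M := mean c k s (S n)).
  assert (Hb : forall b, expect (S k) (Some b) n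
      (fun w => (c k * ln (sf k s b) + loglik c (S k) (Some b) w - M) ^ 2) =
    variance c (S k) (Some b) n + (c k * ln (sf k s b) + mean c (S k) (Some b) n - M) ^ 2).
  { intros b.
    rewrite (expect_ext _ _ _ _
      (fun w => (loglik c (S k) (Some b) w - (M - c k * ln (sf k s b))) ^ 2))
      by (intros; ring).
    rewrite expect_sq_dev. unfold variance, mean. f_equal. ring. }
  rewrite !Hb. reflexivity.
Qed.

Lemma mean_gap_S c k n : mean_gap c k (S n) =
  c k * (binary_entropy (q k) - binary_entropy (p k)) + (p k - q k) * mean_gap c (S k) n.
Proof. unfold mean_gap at 1; rewrite !mean_S; cbn. unfold mean_gap, binary_entropy. ring. Qed.

Lemma mixing_bounds k : 0 <= mixing k <= 1.
Proof.
  unfold mixing. pose proof (hp k); pose proof (hq k).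
  unfold Rabs; destruct (Rcase_abs (p k - q k)); lra.
Qed.

Lemma step_factor_prod_le k s : sf k s false * sf k s true <= mixing k.
Proof.
  unfold mixing. pose proof (hp k); pose proof (hq k).
  unfold Rabs; destruct (Rcase_abs (p k - q k)); destruct s as [[|]|]; simpl; nra.
Qed.

(* Conditioning on the first letter: the variance splits into the two conditional
   variances plus the variance of the conditional means, which is controlled by
   [two_point_log_variance_le] and by the gap between the two conditional means. *)
Lemma variance_step c k s n : 0 <= c k <= 1 ->
  variance c k s (S n) <=
    sf k s false * variance c (S k) (Some false) n + sf k s true * variance c (S k) (Some true) n
    + 32 * c k + 2 * mixing k * mean_gap c (S k) n ^ 2.
Proof.
  intros Hc. rewrite variance_S, (mean_S c k s n).
  pose proof (step_factor_bounds k s false) as Hf. pose proof (step_factor_prod_le k s) as Hmix.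
  assert (Htrue : sf k s true = 1 - sf k s false) by (pose proof (step_factor_sum k s); lra).
  rewrite Htrue in *. unfold mean_gap.
  set (f := sf k s false) in *.
  set (M0 := mean c (S k) (Some false) n). set (M1 := mean c (S k) (Some true) n).
  set (V0 := variance c (S k) (Some false) n). set (V1 := variance c (S k) (Some true) n).
  set (u := c k * ln f - c k * ln (1 - f)).
  pose proof (two_point_log_variance_le f (c k) Hf Hc) as Hu. fold u in Hu.
  set (Y0 := c k * ln f + M0). set (Y1 := c k * ln (1 - f) + M1).
  replace (f * (V0 + (Y0 - (f * Y0 + (1 - f) * Y1)) ^ 2)
           + (1 - f) * (V1 + (Y1 - (f * Y0 + (1 - f) * Y1)) ^ 2))
    with (f * V0 + (1 - f) * V1 + f * (1 - f) * (u + (M0 - M1)) ^ 2) by (unfold u, Y0, Y1; ring).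
  assert ((u + (M0 - M1)) ^ 2 <= 2 * u ^ 2 + 2 * (M0 - M1) ^ 2)
    by (pose proof (pow2_ge_0 (u - (M0 - M1))); nra).
  assert (0 <= f * (1 - f)) by nra.
  assert (f * (1 - f) * (u + (M0 - M1)) ^ 2 <= f * (1 - f) * (2 * u ^ 2 + 2 * (M0 - M1) ^ 2))
    by (apply Rmult_le_compat_l; lra).
  assert (f * (1 - f) * (M0 - M1) ^ 2 <= mixing k * (M0 - M1) ^ 2)
    by (apply Rmult_le_compat_r; [apply pow2_ge_0|lra]).
  clearbody f M0 M1 V0 V1 u Y0 Y1. nra.
Qed.

Lemma mean_gap_step c k n : 0 <= c k <= 1 ->
  Rabs (mean_gap c k (S n)) <=
    3 * c k * sqrt (mixing k) + (1 - mixing k) * Rabs (mean_gap c (S k) n).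
Proof.
  intros Hc. rewrite mean_gap_S. eapply Rle_trans; [apply Rabs_triang|].
  rewrite !Rabs_mult, (Rabs_pos_eq (c k)) by lra.
  replace (Rabs (p k - q k)) with (1 - mixing k) by (unfold mixing; ring).
  rewrite (Rabs_minus_sym (binary_entropy (q k))).
  pose proof (binary_entropy_diff_le (p k) (q k) (hp k) (hq k)) as Hdiff. fold (mixing k) in Hdiff.
  assert (c k * Rabs (binary_entropy (p k) - binary_entropy (q k)) <= c k * (3 * sqrt (mixing k)))
    by (apply Rmult_le_compat_l; lra).
  lra.
Qed.

(* [mean_gap] shrinks by the factor [1 - mixing k] at each step, which pays for the
   [2 mixing k mean_gap^2] term of [variance_step]. *)
Lemma variance_potential_le c : (forall i, 0 <= c i <= 1) ->
  forall n k s, variance c k s n + 4 * mean_gap c k n ^ 2 <= 140 * weight_sum c k n.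
Proof.
  intros Hc n. induction n as [|n IH]; intros k s.
  - unfold variance, mean_gap, mean. rewrite !expect_0. simpl. lra.
  - cbn [weight_sum].
    pose proof (variance_step c k s n (Hc k)) as Hvar.
    pose proof (IH (S k) (Some false)) as IH0. pose proof (IH (S k) (Some true)) as IH1.
    pose proof (step_factor_bounds k s false); pose proof (step_factor_bounds k s true).
    pose proof (step_factor_sum k s). pose proof (mixing_bounds k).
    set (a := sqrt (mixing k)).
    assert (Ha2 : a ^ 2 = mixing k) by (unfold a; simpl; rewrite Rmult_1_r; apply sqrt_sqrt; lra).
    assert (Ha : 0 <= a <= 1).
    { split; [apply sqrt_pos|]. unfold a; rewrite <- sqrt_1; apply sqrt_le_1_alt; lra. }
    pose proof (mean_gap_step c k n (Hc k)) as Hgap. fold a in Hgap. rewrite <- Ha2 in Hgap, Hvar.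
    pose proof (contraction_sq_le _ _ a (c k) (Rabs_pos _) (Rabs_pos _) Ha (Hc k) Hgap) as Hpot.
    rewrite !pow2_abs in Hpot.
    set (V0 := variance c (S k) (Some false) n) in *.
    set (V1 := variance c (S k) (Some true) n) in *.
    set (D := mean_gap c (S k) n) in *. set (W := weight_sum c (S k) n) in *.
    assert (sf k s false * V0 <= sf k s false * (140 * W - 4 * D ^ 2))
      by (apply Rmult_le_compat_l; lra).
    assert (sf k s true * V1 <= sf k s true * (140 * W - 4 * D ^ 2))
      by (apply Rmult_le_compat_l; lra).
    nra.
Qed.

Lemma variance_le c : (forall i, 0 <= c i <= 1) ->
  forall n k s, variance c k s n <= 140 * weight_sum c k n.
Proof.
  intros Hc n k s. pose proof (variance_potential_le c Hc n k s).
  pose proof (pow2_ge_0 (mean_gap c k n)). lra.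
Qed.

Definition from (m i : nat) : R := if (m <=? i)%nat then 1 else 0.

Lemma from_bounds m i : 0 <= from m i <= 1.
Proof. unfold from; destruct (m <=? i)%nat; lra. Qed.

Lemma from_ge m i : (m <= i)%nat -> from m i = 1.
Proof. intros H. unfold from. apply Nat.leb_le in H. rewrite H. reflexivity. Qed.

Lemma from_lt m i : (i < m)%nat -> from m i = 0.
Proof. intros H. unfold from. apply Nat.leb_gt in H. rewrite H. reflexivity. Qed.

Lemma weight_sum_from m n k : weight_sum (from m) k n = INR (n - (m - k)).
Proof.
  revert k; induction n as [|n IH]; intros k; cbn [weight_sum]; [simpl; lra|].
  rewrite IH. destruct (Nat.leb_spec m k).
  - rewrite from_ge by lia.
    replace (n - (m - S k))%nat with n by lia. replace (S n - (m - k))%nat with (S n) by lia.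
    rewrite S_INR; lra.
  - rewrite from_lt by lia. replace (S n - (m - k))%nat with (n - (m - S k))%nat by lia. lra.
Qed.

Lemma loglik_split m w : forall k s,
  loglik (from 0) k s w = loglik (from 0) k s (firstn (m - k) w) + loglik (from m) k s w.
Proof.
  induction w as [|b w IH]; intros k s; [rewrite firstn_nil; simpl; lra|].
  cbn [loglik]. rewrite (IH (S k) (Some b)).
  destruct (Nat.leb_spec m k) as [Hle|Hgt].
  - replace (m - k)%nat with 0%nat by lia. replace (m - S k)%nat with 0%nat by lia.
    rewrite !from_ge by lia. cbn [firstn loglik]. lra.
  - replace (m - k)%nat with (S (m - S k)) by lia. cbn [firstn loglik].
    rewrite (from_lt m k), !(from_ge 0) by lia. lra.
Qed.

Lemma expect_firstn j : forall n k s F, (j <= n)%nat ->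
  expect k s n (fun w => F (firstn j w)) = expect k s j F.
Proof.
  induction j as [|j IH]; intros n k s F Hjn.
  - simpl. rewrite expect_const, expect_0. reflexivity.
  - destruct n as [|n]; [lia|]. rewrite !expect_S. cbn [firstn].
    rewrite (IH n (S k) (Some false) (fun u => F (false :: u))),
            (IH n (S k) (Some true) (fun u => F (true :: u))) by lia.
    reflexivity.
Qed.

(* [centered m n] is the part of [ln mu (I_n)] coming from the steps [m .. n-1], minus its mean. *)
Definition centered m n w := loglik (from m) 0 None w - mean (from m) 0 None n.

Lemma centered_split m n w : (m <= n)%nat ->
  centered 0 n w = centered 0 m (firstn m w) + centered m n w.
Proof.
  intros Hmn. unfold centered.
  assert (Hmean : mean (from 0) 0 None n = mean (from 0) 0 None m + mean (from m) 0 None n).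
  { unfold mean at 1.
    rewrite (expect_ext _ _ _ _ (fun w => 1 * loglik (from 0) 0 None (firstn m w) +
                                          1 * loglik (from m) 0 None w))
      by (intros u; rewrite (loglik_split m u 0 None), Nat.sub_0_r; ring).
    rewrite expect_lin, (expect_firstn m n 0 None (loglik (from 0) 0 None)) by auto.
    unfold mean; ring. }
  rewrite Hmean, (loglik_split m w 0 None), Nat.sub_0_r. ring.
Qed.

Lemma centered_sq_le m n : expect 0 None n (fun w => centered m n w ^ 2) <= 140 * INR (n - m).
Proof.
  pose proof (variance_le (from m) (from_bounds m) n 0 None) as Hvar.
  rewrite weight_sum_from, Nat.sub_0_r in Hvar. exact Hvar.
Qed.

Definition msum (l : list (list bool)) : R := sumR (map (cyl_mass p q) l).

Definition exceed_words n t (G : list bool -> R) : list (list bool) :=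
  filter (fun w => if Rle_dec t (Rabs (G w)) then true else false) (words n).

Lemma chebyshev n t G : 0 < t ->
  msum (exceed_words n t G) <= expect 0 None n (fun w => G w ^ 2) / t ^ 2.
Proof.
  intros Ht. assert (Ht2 : 0 < t ^ 2) by (apply pow_lt; lra).
  unfold Rdiv. rewrite Rmult_comm. unfold expect, msum, exceed_words, cyl_mass.
  rewrite <- sumR_map_scal.
  induction (words n) as [|w l IH]; [unfold sumR; simpl; lra|]. cbn [filter map].
  pose proof (mass_aux_nonneg 0 None w) as Hm.
  assert (0 <= / t ^ 2 * (mass_aux p q 0 None w * G w ^ 2)).
  { apply Rmult_le_pos; [left; apply Rinv_0_lt_compat; lra|].
    apply Rmult_le_pos; [lra|apply pow2_ge_0]. }
  destruct (Rle_dec t (Rabs (G w))) as [Hle|]; unfold sumR in *; cbn [map fold_right]; [|lra].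
  assert (t ^ 2 <= G w ^ 2) by (rewrite <- (pow2_abs (G w)); apply pow_incr; lra).
  assert (mass_aux p q 0 None w * t ^ 2 <= mass_aux p q 0 None w * G w ^ 2)
    by (apply Rmult_le_compat_l; lra).
  assert (mass_aux p q 0 None w <= / t ^ 2 * (mass_aux p q 0 None w * G w ^ 2)).
  { apply (Rmult_le_reg_l (t ^ 2)); [lra|].
    rewrite <- Rmult_assoc, Rinv_r by lra. lra. }
  lra.
Qed.

Lemma ln_mass_aux w : forall k s,
  0 < mass_aux p q k s w -> ln (mass_aux p q k s w) = loglik (from 0) k s w.
Proof.
  induction w as [|b w IH]; intros k s Hpos; cbn [mass_aux loglik] in *; [apply ln_1|].
  pose proof (step_factor_bounds k s b). pose proof (mass_aux_nonneg (S k) (Some b) w).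
  assert (Hsf : 0 < sf k s b).
  { destruct (Req_dec (sf k s b) 0) as [Hz|Hz]; [rewrite Hz in Hpos|]; lra. }
  assert (Hrest : 0 < mass_aux p q (S k) (Some b) w).
  { destruct (Req_dec (mass_aux p q (S k) (Some b) w) 0) as [Hz|Hz]; [rewrite Hz in Hpos|]; lra. }
  rewrite ln_mult, IH, (from_ge 0 k) by (auto || lia). ring.
Qed.

Lemma c_seq_mean n : c_seq p q n = - / (INR n * ln 2) * mean (from 0) 0 None n.
Proof.
  unfold c_seq, mean, expect, sumR. do 2 f_equal. apply map_ext. intros w.
  unfold xlogx, cyl_mass. destruct (Req_EM_T (mass_aux p q 0 None w) 0) as [Hz|Hnz].
  - rewrite Hz; ring.
  - rewrite ln_mass_aux; [reflexivity|].
    pose proof (mass_aux_nonneg 0 None w). lra.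
Qed.

Fixpoint light_word k s L : list bool :=
  match L with
  | O => nil
  | S L => let b := if Rle_dec (sf k s false) (sf k s true) then false else true in
           b :: light_word (S k) (Some b) L
  end.

Lemma light_word_mass L : forall k s, mass_aux p q k s (light_word k s L) <= (/ 2) ^ L.
Proof.
  induction L as [|L IH]; intros k s; cbn [light_word mass_aux pow]; [lra|].
  pose proof (step_factor_sum k s).
  destruct (Rle_dec (sf k s false) (sf k s true)) as [Hle|Hgt]; cbn [mass_aux];
    match goal with |- sf k s ?b * mass_aux p q _ _ ?w <= _ =>
      pose proof (IH (S k) (Some b)); pose proof (mass_aux_nonneg (S k) (Some b) w);
      pose proof (step_factor_bounds k s b);
      apply Rmult_le_compat; lra end.
Qed.

Lemma mass_aux_app_zero u v : forall k s,
  mass_aux p q k s u = 0 -> mass_aux p q k s (u ++ v) = 0.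
Proof.
  induction u as [|b u IH]; intros k s Hz; cbn [mass_aux app] in *; [lra|].
  destruct (Rmult_integral _ _ Hz) as [H0|H0]; [rewrite H0|rewrite IH by exact H0]; ring.
Qed.

Lemma msum_app l1 l2 : msum (l1 ++ l2) = msum l1 + msum l2.
Proof. unfold msum. rewrite map_app. apply sumR_app. Qed.

Lemma mu_null_mono (N N' : (nat -> bool) -> Prop) :
  (forall x, N x -> N' x) -> mu_null p q N' -> mu_null p q N.
Proof.
  intros HN Hnull eps Heps. destruct (Hnull eps Heps) as [W [Hcov Hsum]].
  exists W. split; auto.
Qed.

(* Borel-Cantelli: stages are padded with light cylinders so that they can be
   enumerated as one sequence. *)
Lemma mu_null_limsup (A : nat -> list (list bool)) :
  (forall eps, eps > 0 -> exists B, forall M, sumR (map (fun m => msum (A m)) (seq B M)) <= eps) ->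
  mu_null p q (fun x => forall B, exists m w, (B <= m)%nat /\ In w (A m) /\ in_cyl w x).
Proof.
  intros Htail eps Heps.
  destruct (Htail (eps / 2)) as [B HB]; [lra|].
  assert (Hhalf : Rabs (/ 2) < 1) by (rewrite Rabs_pos_eq; lra).
  destruct (pow_lt_1_zero (/ 2) Hhalf (eps / 4)) as [c0 Hc0]; [lra|].
  specialize (Hc0 c0 (Nat.le_refl _)). rewrite Rabs_pos_eq in Hc0 by (apply pow_le; lra).
  set (st j := light_word 0 None (j + c0) :: A (B + j)%nat).
  assert (Hst : forall j, st j <> nil) by (intros j; discriminate).
  exists (enum_stages nil st). split.
  - intros x Hx. destruct (Hx B) as [m [w [Hm [Hw Hcyl]]]].
    destruct (enum_stages_complete nil st Hst (m - B) w) as [i Hi].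
    { right. replace (B + (m - B))%nat with m by lia. exact Hw. }
    exists i. rewrite Hi. exact Hcyl.
  - intros M. eapply Rle_trans; [apply sum_enum_stages_le; auto; intros; apply mass_aux_nonneg|].
    change (sumR (map (fun j => msum (st j)) (seq 0 M)) <= eps).
    eapply Rle_trans.
    { apply (sumR_map_le _ (fun j => (/ 2) ^ (j + c0) + msum (A (B + j)%nat))). intros j _.
      unfold st, msum. rewrite sumR_map_cons.
      pose proof (light_word_mass (j + c0) 0 None). unfold cyl_mass at 1. lra. }
    rewrite sumR_map_plus, (map_seq_add (fun m => msum (A m))), Nat.add_0_r.
    pose proof (sum_geom_half_le c0 M). specialize (HB M). lra.
Qed.

Definition zero_words n : list (list bool) :=
  filter (fun w => if Req_EM_T (cyl_mass p q w) 0 then true else false) (words n).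

Lemma msum_zero_words n : msum (zero_words n) = 0.
Proof.
  unfold msum, zero_words. induction (words n) as [|w l IH]; [reflexivity|]. cbn [filter].
  destruct (Req_EM_T (cyl_mass p q w) 0) as [Hz|]; [|exact IH].
  unfold sumR in *; cbn. rewrite Hz, IH. ring.
Qed.

Definition root4_inv (m : nat) : R := / sqrt (sqrt (INR m)).
Definition threshold (m : nat) : R := INR (m * m) * root4_inv m / 2.

(* The cylinders of stage [m] contain every point with [mu (I_m(x)) = 0] and every point
   for which [ln mu (I_n(x))] deviates from its mean by [2 threshold m] for some
   [n] in [m^2 .. m^2 + 2m]. *)
Definition stage (m : nat) : list (list bool) :=
  zero_words m ++ exceed_words (m * m) (threshold m) (centered 0 (m * m)) ++
  flat_map (fun n => exceed_words n (threshold m) (centered (m * m) n)) (seq (m * m) (2 * m + 1)).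

Lemma root4_inv_pos m : (1 <= m)%nat -> 0 < root4_inv m.
Proof.
  intros Hm. unfold root4_inv. apply Rinv_0_lt_compat, sqrt_lt_R0, sqrt_lt_R0, lt_0_INR. lia.
Qed.

Lemma threshold_sq m : (1 <= m)%nat -> threshold m ^ 2 = sqrt (INR m) ^ 7 / 4.
Proof.
  intros Hm. set (r := sqrt (INR m)).
  assert (Hr : 0 < r) by (apply sqrt_lt_R0, lt_0_INR; lia).
  assert (Hrr : INR m = r * r) by (symmetry; apply sqrt_sqrt, pos_INR).
  assert (Hsr : sqrt r * sqrt r = r) by (apply sqrt_sqrt; lra).
  assert (0 < sqrt r) by (apply sqrt_lt_R0; lra).
  unfold threshold, root4_inv. fold r. rewrite mult_INR, Hrr.
  replace (r ^ 7) with (r ^ 8 / (sqrt r * sqrt r)) by (rewrite Hsr; field; lra).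
  field. lra.
Qed.

Lemma stage_mass_le m : (1 <= m)%nat -> msum (stage m) <= 3920 / (INR m * sqrt (INR m)).
Proof.
  intros Hm. unfold stage. rewrite !msum_app, msum_zero_words.
  assert (HT : 0 < threshold m).
  { unfold threshold. pose proof (root4_inv_pos m Hm).
    assert (0 < INR (m * m)) by (apply lt_0_INR; lia). nra. }
  assert (HA : msum (exceed_words (m * m) (threshold m) (centered 0 (m * m)))
               <= 140 * INR (m * m) / threshold m ^ 2).
  { eapply Rle_trans; [apply chebyshev; exact HT|]. apply Rmult_le_compat_r.
    - left; apply Rinv_0_lt_compat, pow_lt; lra.
    - rewrite <- (Nat.sub_0_r (m * m)) at 2. apply centered_sq_le. }
  assert (HB : msum (flat_map (fun n => exceed_words n (threshold m) (centered (m * m) n))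
                              (seq (m * m) (2 * m + 1)))
               <= INR (2 * m + 1) * (140 * INR (2 * m) / threshold m ^ 2)).
  { unfold msum. rewrite sumR_flat_map.
    replace (INR (2 * m + 1)) with (INR (length (seq (m * m) (2 * m + 1))))
      by (rewrite length_seq; auto).
    apply sumR_map_const_le. intros n Hn. apply in_seq in Hn.
    eapply Rle_trans; [apply chebyshev; exact HT|]. apply Rmult_le_compat_r.
    - left; apply Rinv_0_lt_compat, pow_lt; lra.
    - eapply Rle_trans; [apply centered_sq_le|].
      apply Rmult_le_compat_l; [lra|]. apply le_INR. lia. }
  rewrite threshold_sq in HA, HB by exact Hm.
  set (r := sqrt (INR m)) in *.
  assert (Hr : 0 < r) by (apply sqrt_lt_R0, lt_0_INR; lia).
  assert (Hrr : INR m = r * r) by (symmetry; apply sqrt_sqrt, pos_INR).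
  assert (H1 : 1 <= r * r) by (rewrite <- Hrr; apply (le_INR 1); lia).
  rewrite !mult_INR, Hrr in HA. rewrite plus_INR, !mult_INR, Hrr in HB. cbn [INR] in HB.
  rewrite Hrr.
  replace (140 * (r * r * (r * r)) / (r ^ 7 / 4)) with (560 / (r * r * r)) in HA by (field; lra).
  replace ((1 + 1) * (r * r) + 1) with (2 * (r * r) + 1) in HB by ring.
  replace (140 * ((1 + 1) * (r * r)) / (r ^ 7 / 4)) with (1120 / (r * r * r * r * r)) in HB
    by (field; lra).
  assert ((2 * (r * r) + 1) * (1120 / (r * r * r * r * r)) <= 3360 / (r * r * r)).
  { replace ((2 * (r * r) + 1) * (1120 / (r * r * r * r * r)))
      with ((2240 * (r * r) + 1120) / (r * r * r * r * r)) by (field; lra).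
    replace (3360 / (r * r * r)) with (3360 * (r * r) / (r * r * r * r * r)) by (field; lra).
    apply Rmult_le_compat_r; [|lra].
    left. apply Rinv_0_lt_compat. repeat apply Rmult_lt_0_compat; lra. }
  replace (3920 / (r * r * r)) with (560 / (r * r * r) + 3360 / (r * r * r)) by (field; lra).
  lra.
Qed.

Lemma stage_tails_small eps : eps > 0 ->
  exists B, forall M, sumR (map (fun m => msum (stage m)) (seq B M)) <= eps.
Proof.
  intros Heps. set (K := 7840 / eps).
  assert (HK : 0 < K) by (apply Rdiv_lt_0_compat; lra).
  destruct (INR_unbounded (K ^ 2)) as [J HJ].
  exists (J + 2)%nat. intros M.
  eapply Rle_trans.
  { apply (sumR_map_le _ (fun m => 3920 * / (INR m * sqrt (INR m)))). intros m Hm.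
    apply in_seq in Hm. apply stage_mass_le. lia. }
  rewrite sumR_map_scal.
  eapply Rle_trans; [apply Rmult_le_compat_l; [lra|apply sum_inv_pow32_le; lia]|].
  rewrite plus_INR. cbn [INR]. replace (INR J + (1 + 1) - 1) with (INR J + 1) by ring.
  assert (Hsqrt : K <= sqrt (INR J + 1)).
  { rewrite <- (sqrt_pow2 K) by lra. apply sqrt_le_1_alt. lra. }
  apply (Rmult_le_reg_r (sqrt (INR J + 1))); [lra|].
  replace (3920 * (2 / sqrt (INR J + 1)) * sqrt (INR J + 1)) with 7840 by (field; lra).
  unfold K in Hsqrt. apply (Rmult_le_compat_l eps) in Hsqrt; [|lra].
  replace (eps * (7840 / eps)) with 7840 in Hsqrt by (field; lra). lra.
Qed.

Lemma stage_catches_zero_mass x L m : (L <= m)%nat -> cyl_mass p q (prefix x L) = 0 ->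
  exists w, In w (stage m) /\ in_cyl w x.
Proof.
  intros HLm Hz. exists (prefix x m). split; [|apply in_cyl_prefix].
  apply in_or_app. left. apply filter_In. split.
  - rewrite <- (prefix_length x m) at 2. apply words_complete.
  - destruct (prefix_app x L m HLm) as [s Hs].
    unfold cyl_mass in *. rewrite Hs, mass_aux_app_zero by exact Hz.
    destruct (Req_EM_T 0 0); [reflexivity|congruence].
Qed.

(* Either the deviation is already large at time [m^2], or it is large on the increment
   from [m^2] to [n]. *)
Lemma stage_catches_deviation x m n : (m * m <= n <= m * m + 2 * m)%nat ->
  2 * threshold m <= Rabs (centered 0 n (prefix x n)) ->
  exists w, In w (stage m) /\ in_cyl w x.
Proof.
  intros Hn Hdev. rewrite (centered_split (m * m) n) in Hdev by lia.
  rewrite firstn_prefix in Hdev by lia.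
  assert (Hexceed : forall k (G : list bool -> R), threshold m <= Rabs (G (prefix x k)) ->
            In (prefix x k) (exceed_words k (threshold m) G)).
  { intros k G HG. apply filter_In. split.
    - rewrite <- (prefix_length x k) at 2. apply words_complete.
    - destruct (Rle_dec _ _); [reflexivity|contradiction]. }
  destruct (Rle_dec (threshold m) (Rabs (centered 0 (m * m) (prefix x (m * m))))) as [HA|HA].
  - exists (prefix x (m * m)). split; [|apply in_cyl_prefix].
    apply in_or_app; right; apply in_or_app; left. apply Hexceed, HA.
  - exists (prefix x n). split; [|apply in_cyl_prefix].
    apply in_or_app; right; apply in_or_app; right.
    apply in_flat_map. exists n. split; [apply in_seq; lia|]. apply Hexceed.
    pose proof (Rabs_triang (centered 0 (m * m) (prefix x (m * m)))
                            (centered (m * m) n (prefix x n))).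
    lra.
Qed.

Lemma normalized_deviation x n : (1 <= n)%nat -> 0 < cyl_mass p q (prefix x n) ->
  ln (cyl_mass p q (prefix x n)) / (- INR n * ln 2) - c_seq p q n =
  - centered 0 n (prefix x n) / (INR n * ln 2).
Proof.
  intros Hn Hpos. rewrite c_seq_mean. unfold centered, cyl_mass in *.
  rewrite ln_mass_aux by exact Hpos.
  assert (0 < INR n) by (apply lt_0_INR; lia). pose proof ln_lt_2.
  field. split; lra.
Qed.

Lemma root4_inv_small e : e > 0 -> exists m1, forall m, (m1 <= m)%nat -> root4_inv m <= e.
Proof.
  intros He. set (A := / e). assert (HA : 0 < A) by (apply Rinv_0_lt_compat; lra).
  destruct (INR_unbounded ((A ^ 2) ^ 2)) as [m1 Hm1]. exists m1. intros m Hm.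
  assert (HmA : (A ^ 2) ^ 2 <= INR m) by (pose proof (le_INR _ _ Hm); lra).
  assert (H1 : A ^ 2 <= sqrt (INR m)).
  { rewrite <- (sqrt_pow2 (A ^ 2)) by (apply pow_le; lra). apply sqrt_le_1_alt; auto. }
  assert (H2 : A <= sqrt (sqrt (INR m))).
  { rewrite <- (sqrt_pow2 A) by lra. apply sqrt_le_1_alt; auto. }
  unfold root4_inv. replace e with (/ A) by (unfold A; field; lra).
  apply Rinv_le_contravar; auto.
Qed.

Lemma not_Un_cv_0_frequently (u : nat -> R) : ~ Un_cv u 0 ->
  exists e, e > 0 /\ forall N, exists n, (N <= n)%nat /\ e <= Rabs (u n).
Proof.
  intros Hncv. apply NNPP. intros Hno. apply Hncv. intros e He.
  apply NNPP. intros HnoN. apply Hno. exists e. split; [exact He|]. intros N.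
  apply NNPP. intros Hnon. apply HnoN. exists N. intros n Hn.
  unfold R_dist. rewrite Rminus_0_r. apply Rnot_le_lt. intros Hle. apply Hnon. exists n. auto.
Qed.

(* A deviation [e n ln 2] at time [n] exceeds [2 threshold m] once [m = isqrt n] is so
   large that [root4_inv m <= e ln 2]. *)
Lemma nonconvergent_caught x :
  ~ Un_cv (fun n => ln (cyl_mass p q (prefix x n)) / (- INR n * ln 2) - c_seq p q n) 0 ->
  forall B, exists m w, (B <= m)%nat /\ In w (stage m) /\ in_cyl w x.
Proof.
  intros Hncv B.
  destruct (classic (exists L, cyl_mass p q (prefix x L) = 0)) as [[L HL]|Hpos].
  { destruct (stage_catches_zero_mass x L (Nat.max B L)) as [w Hw]; [lia|exact HL|].
    exists (Nat.max B L), w. split; [lia|exact Hw]. }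
  assert (Hpos' : forall n, 0 < cyl_mass p q (prefix x n)).
  { intros n. pose proof (mass_aux_nonneg 0 None (prefix x n)). unfold cyl_mass in *.
    destruct (Req_dec (mass_aux p q 0 None (prefix x n)) 0) as [Hz|]; [|lra].
    exfalso. apply Hpos. exists n. exact Hz. }
  destruct (not_Un_cv_0_frequently _ Hncv) as [e [He Hfreq]].
  pose proof ln_lt_2.
  destruct (root4_inv_small (e * ln 2)) as [m1 Hm1]; [apply Rmult_lt_0_compat; lra|].
  set (B' := Nat.max B (Nat.max m1 1)).
  destruct (Hfreq (B' * B')%nat) as [n [Hn Hdev]].
  set (m := Nat.sqrt n).
  assert (HBm : (B' <= m)%nat) by (apply Nat.sqrt_le_square; lia).
  destruct (Nat.sqrt_spec n (Nat.le_0_l n)) as [Hsq1 Hsq2]. fold m in Hsq1, Hsq2.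
  assert (Hn1 : (1 <= n)%nat) by nia.
  rewrite normalized_deviation in Hdev by auto.
  assert (HnR : 0 < INR n * ln 2) by (pose proof (lt_0_INR n ltac:(lia)); nra).
  assert (Hdev' : e * (INR n * ln 2) <= Rabs (centered 0 n (prefix x n))).
  { unfold Rdiv in Hdev.
    rewrite Rabs_mult, Rabs_Ropp, (Rabs_pos_eq (/ _)) in Hdev
      by (left; apply Rinv_0_lt_compat; lra).
    apply (Rmult_le_compat_r (INR n * ln 2)) in Hdev; [|lra].
    rewrite Rmult_assoc, Rinv_l, Rmult_1_r in Hdev by lra. exact Hdev. }
  exists m.
  destruct (stage_catches_deviation x m n) as [w Hw]; [nia| |exists w; split; [lia|exact Hw]].
  unfold threshold.
  assert (root4_inv m * INR (m * m) <= e * ln 2 * INR n).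
  { apply Rmult_le_compat;
      [left; apply root4_inv_pos; lia|apply pos_INR|apply Hm1; lia|apply le_INR; lia]. }
  lra.
Qed.

End Chain.

Theorem mainTheorem6 (p q : nat -> R)
  (hp : forall n, 0 <= p n <= 1) (hq : forall n, 0 <= q n <= 1) :
  mu_null p q (fun x =>
    ~ Un_cv (fun n => ln (cyl_mass p q (prefix x n)) / (- INR n * ln 2) - c_seq p q n) 0).
Proof.
  apply (mu_null_mono p q _ _ (nonconvergent_caught p q hp hq)).
  apply (mu_null_limsup p q hp hq).
  apply (stage_tails_small p q hp hq).
Qed.
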